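(* Let $v_{1,1},v_{2,1},w_{1,1},w_{2,1}\in\mathbb R$ satisfy $w_{i,1}>0$, $4v_{i,1}+w_{i,1}>0$ ($i=1,2$), $v_{1,1}v_{2,1}>0$ and $c_2>c_1$, where $c_i:=2v_{i,1}+w_{i,1}$. Then for every $\vartheta\in(-\pi,\pi]$ one has $2\omega_+(\vartheta)\neq\omega_-(2\vartheta)$ and $2\omega_+(\vartheta)\neq\omega_+(2\vartheta)$.
   Context: For $\vartheta\in\mathbb R$ define $$\omega_\pm(\vartheta):=\sqrt{\tfrac12\Big(c_1+c_2\pm\sqrt{(c_1-c_2)^2+8v_{1,1}v_{2,1}(\cos\vartheta+1)}\Big)},$$ which are well defined and positive under the stated assumptions (these are the optical ($+$) and acoustical ($-$) branches of the dispersion relation $\det H(\omega,\vartheta)=0$, $H(\omega,\vartheta)=\begin{pmatrix}\omega^2-c_1 & v_{1,1}(e^{i\vartheta}+1)\\ v_{2,1}(1+e^{-i\vartheta}) & \omega^2-c_2\end{pmatrix}$, of the linearized diatomic chain). *)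

From Stdlib Require Import Reals Lra.
Open Scope R_scope.

Definition cc (v w : R) : R := 2 * v + w.

Definition omega_p (v11 v21 w11 w21 th : R) : R :=
  let c1 := cc v11 w11 in let c2 := cc v21 w21 in
  sqrt ((1/2) * (c1 + c2 + sqrt ((c1 - c2)^2 + 8 * v11 * v21 * (cos th + 1)))).

Definition omega_m (v11 v21 w11 w21 th : R) : R :=
  let c1 := cc v11 w11 in let c2 := cc v21 w21 in
  sqrt ((1/2) * (c1 + c2 - sqrt ((c1 - c2)^2 + 8 * v11 * v21 * (cos th + 1)))).

From Stdlib Require Import Reals Lra Psatz.
Open Scope R_scope.

(** The hypotheses give [c_i > 2 |v_i1|], hence [4 v11 v21 < c1 c2].
    The discriminant [(c1 - c2)^2 + 8 v11 v21 (cos t + 1)] lies between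
    [(c2 - c1)^2] and [(c2 - c1)^2 + 16 v11 v21 < (3 c2 - c1)^2], so at every
    angle [c2 <= omega_+^2] and [omega_-^2, omega_+^2 < 2 c2]. *)

Lemma cc_gt_2abs {v w : R} : 0 < w -> 0 < 4 * v + w -> 2 * Rabs v < cc v w.
Proof. unfold cc, Rabs; destruct (Rcase_abs v); lra. Qed.

Lemma cc_pos {v w : R} : 0 < w -> 0 < 4 * v + w -> 0 < cc v w.
Proof. intros hw h4; pose proof (cc_gt_2abs hw h4); pose proof (Rabs_pos v); lra. Qed.

Lemma double_neq_of_sqr_lt (a b : R) : 0 < a -> 0 <= b -> b ^ 2 < 4 * a ^ 2 ->
  2 * a <> b.
Proof. intros ha hb hlt E; subst b; lra. Qed.

Section Branches.

Variables v11 v21 w11 w21 : R.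
Hypotheses (hw1 : 0 < w11) (hw2 : 0 < w21)
  (h41 : 0 < 4 * v11 + w11) (h42 : 0 < 4 * v21 + w21)
  (hv : 0 < v11 * v21) (hc : cc v11 w11 < cc v21 w21).

Let c1 := cc v11 w11.
Let c2 := cc v21 w21.
Let c1_pos : 0 < c1 := cc_pos hw1 h41.
Let c2_pos : 0 < c2 := cc_pos hw2 h42.
Let c1_lt_c2 : c1 < c2 := hc.
Let disc (th : R) := (c1 - c2) ^ 2 + 8 * v11 * v21 * (cos th + 1).

Lemma four_v_lt_c1_c2 : 4 * (v11 * v21) < c1 * c2.
Proof.
  pose proof (cc_gt_2abs hw1 h41) as hc1; pose proof (cc_gt_2abs hw2 h42) as hc2.
  fold c1 c2 in hc1, hc2.
  assert (hprod : v11 * v21 = Rabs v11 * Rabs v21).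
  { rewrite <- Rabs_mult; symmetry; apply Rabs_pos_eq; lra. }
  pose proof (Rabs_pos v11); pose proof (Rabs_pos v21).
  nra.
Qed.

Lemma sqrt_disc_ge (th : R) : c2 - c1 <= sqrt (disc th).
Proof.
  destruct (COS_bound th) as [hcos _].
  rewrite <- (sqrt_pow2 (c2 - c1)) by (pose proof c1_lt_c2; lra).
  apply sqrt_le_1_alt; unfold disc; nra.
Qed.

Lemma sqrt_disc_lt (th : R) : sqrt (disc th) < 3 * c2 - c1.
Proof.
  destruct (COS_bound th) as [hcos hcos'].
  pose proof four_v_lt_c1_c2 as hcv.
  pose proof c1_pos; pose proof c1_lt_c2.
  rewrite <- (sqrt_pow2 (3 * c2 - c1)) by lra.
  apply sqrt_lt_1_alt; split; unfold disc; nra.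
Qed.

Lemma omega_p_sqr_ge (th : R) : c2 <= omega_p v11 v21 w11 w21 th ^ 2.
Proof.
  pose proof (sqrt_disc_ge th) as hS.
  unfold omega_p; fold c1 c2; fold (disc th).
  pose proof c2_pos.
  rewrite pow2_sqrt by lra.
  lra.
Qed.

Lemma omega_p_sqr_lt (th : R) : omega_p v11 v21 w11 w21 th ^ 2 < 2 * c2.
Proof.
  pose proof (sqrt_disc_ge th) as hS; pose proof (sqrt_disc_lt th) as hS'.
  unfold omega_p; fold c1 c2; fold (disc th).
  pose proof c2_pos.
  rewrite pow2_sqrt by lra.
  lra.
Qed.

Lemma omega_m_sqr_lt (th : R) : omega_m v11 v21 w11 w21 th ^ 2 < 2 * c2.
Proof.
  pose proof (sqrt_disc_ge th) as hS; pose proof (sqrt_disc_lt th) as hS'.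
  pose proof (sqrt_pos (disc th)) as hS0.
  unfold omega_m; fold c1 c2; fold (disc th).
  destruct (Rle_or_lt 0 ((1/2) * (c1 + c2 - sqrt (disc th)))) as [hpos | hneg].
  - rewrite pow2_sqrt by exact hpos. lra.
  - rewrite sqrt_neg_0 by lra. pose proof c2_pos. lra.
Qed.

End Branches.

Theorem mainTheorem1 (v11 v21 w11 w21 : R)
  (hw1 : 0 < w11) (hw2 : 0 < w21)
  (h41 : 0 < 4 * v11 + w11) (h42 : 0 < 4 * v21 + w21)
  (hv : 0 < v11 * v21)
  (hc : cc v11 w11 < cc v21 w21) :
  forall th : R, - PI < th <= PI ->
    2 * omega_p v11 v21 w11 w21 th <> omega_m v11 v21 w11 w21 (2 * th) /\
    2 * omega_p v11 v21 w11 w21 th <> omega_p v11 v21 w11 w21 (2 * th).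
Proof.
  intros th _.
  pose proof (omega_p_sqr_ge _ _ _ _ hw1 hw2 h41 h42 hv hc th) as hge.
  pose proof (omega_p_sqr_lt _ _ _ _ hw1 hw2 h41 h42 hv hc (2 * th)) as hltp.
  pose proof (omega_m_sqr_lt _ _ _ _ hw1 hw2 h41 h42 hv hc (2 * th)) as hltm.
  pose proof (cc_pos hw2 h42).
  assert (hnn : 0 <= omega_p v11 v21 w11 w21 th) by apply sqrt_pos.
  assert (hpos : 0 < omega_p v11 v21 w11 w21 th) by nra.
  split; apply double_neq_of_sqr_lt; try apply sqrt_pos; lra.
Qed.
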